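(* Let $R$ be an arithmetic ring and $M$ a finitely generated $R$-module. If $M$ has a pure-composition series $\{0\}=M_0\subset\dots\subset M_n=M$ with nonzero cyclic factors and an increasing annihilator sequence, then $n=\mu(M)$, the minimal number of generators of $M$.
   Context: All rings are commutative with identity. $R$ is arithmetic if $R_P$ is a valuation ring (ideals totally ordered) for every maximal ideal $P$. A submodule $F\subseteq E$ is pure if $0\to F\to E\to E/F\to0$ stays exact under tensoring with every module. A pure-composition series of $M$ is a finite chain $\{0\}=M_0\subset M_1\subset\dots\subset M_n=M$ (strict inclusions) of pure submodules; its annihilator sequence is $(A_i)$ with $A_i=\mathrm{ann}(M_i/M_{i-1})$, increasing if $A_1\subseteq\dots\subseteq A_n$. *)

From HB Require Import structures.
From mathcomp Require Import all_boot all_algebra.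
Set Implicit Arguments. Unset Strict Implicit. Unset Printing Implicit Defensive.
Import GRing.Theory.
Local Open Scope ring_scope.

Section RingDefs.
Variable R : comPzRingType.

Definition ideal (I : R -> Prop) : Prop :=
  [/\ I 0, (forall a b, I a -> I b -> I (a + b)) & (forall r a, I a -> I (r * a))].

Definition maximal_ideal (P : R -> Prop) : Prop :=
  [/\ ideal P, ~ P 1 &
      forall J : R -> Prop, ideal J -> (forall a, P a -> J a) ->
        (forall a, J a -> P a) \/ J 1].

(** The localization R_P, written out literally: fractions (a, s) with s
    outside P, modulo (a,s) ~ (b,t) iff u (a t - b s) = 0 for some u
    outside P.  An ideal of R_P is a saturated set of such fractions
    containing 0 and closed under sums and multiplication by fractions. *)
Definition frac_equiv (P : R -> Prop) (x y : R * R) : Prop :=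
  exists u, ~ P u /\ u * (x.1 * y.2 - y.1 * x.2) = 0.

Definition loc_ideal (P : R -> Prop) (I : R * R -> Prop) : Prop :=
  [/\ (forall x, I x -> ~ P x.2),
      (forall x y, I x -> ~ P y.2 -> frac_equiv P x y -> I y),
      I (0, 1),
      (forall x y, I x -> I y -> I (x.1 * y.2 + y.1 * x.2, x.2 * y.2)) &
      (forall c x, ~ P c.2 -> I x -> I (c.1 * x.1, c.2 * x.2))].

Definition loc_valuation (P : R -> Prop) : Prop :=
  forall I J, loc_ideal P I -> loc_ideal P J ->
    (forall x, I x -> J x) \/ (forall x, J x -> I x).

Definition arithmetic : Prop :=
  forall P, maximal_ideal P -> loc_valuation P.

Definition submodule (M : lmodType R) (A : M -> Prop) : Prop :=
  [/\ A 0, (forall x y, A x -> A y -> A (x + y)) & (forall r x, A x -> A (r *: x))].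

Definition bilinear_on (N E T : lmodType R) (F : E -> Prop) (B : N -> E -> T) : Prop :=
  [/\ (forall x n1 n2, F x -> B (n1 + n2) x = B n1 x + B n2 x),
      (forall x r n, F x -> B (r *: n) x = r *: B n x),
      (forall n x y, F x -> F y -> B n (x + y) = B n x + B n y) &
      (forall n r x, F x -> B n (r *: x) = r *: B n x)].

(** The element \sum_i n_i (x) f_i of N (x)_R F is zero (universal property of
    the tensor product: it is killed by every bilinear map on N x F). *)
Definition tensor_zero_on (N E : lmodType R) (F : E -> Prop) (s : seq (N * E)) : Prop :=
  forall (T : lmodType R) (B : N -> E -> T), bilinear_on F B ->
    \sum_(p <- s) B p.1 p.2 = 0.

(** F is a pure submodule of E: for every module N, N (x) F -> N (x) E is
    injective (tensoring 0 -> F -> E -> E/F -> 0 stays exact; right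
    exactness is automatic). *)
Definition pure (E : lmodType R) (F : E -> Prop) : Prop :=
  submodule F /\
  forall (N : lmodType R) (s : seq (N * E)),
    (forall p, p \in s -> F p.2) ->
    tensor_zero_on (fun _ => True) s -> tensor_zero_on F s.

Definition strict_subset (M : lmodType R) (A B : M -> Prop) : Prop :=
  (forall x, A x -> B x) /\ exists x, B x /\ ~ A x.

Definition pure_composition_series (M : lmodType R) (Ms : nat -> M -> Prop) (n : nat) : Prop :=
  [/\ (forall x, Ms 0%N x <-> x = 0),
      (forall x, Ms n x),
      (forall i, (i <= n)%N -> pure (Ms i)) &
      (forall i, (i < n)%N -> strict_subset (Ms i) (Ms i.+1))].

Definition cyclic_nonzero_quotient (M : lmodType R) (A B : M -> Prop) : Prop :=
  (exists x, A x /\ forall y, A y -> exists r, B (y - r *: x)) /\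
  (exists y, A y /\ ~ B y).

Definition ann_quotient (M : lmodType R) (A B : M -> Prop) (r : R) : Prop :=
  forall x, A x -> B (r *: x).

Definition generates (M : lmodType R) (s : seq M) : Prop :=
  forall m : M, exists c : 'I_(size s) -> R, m = \sum_(i < size s) c i *: s`_i.

Definition finitely_generated (M : lmodType R) : Prop :=
  exists s : seq M, generates s.

Definition min_num_generators (M : lmodType R) (k : nat) : Prop :=
  (exists s : seq M, size s = k /\ generates s) /\
  (forall s : seq M, generates s -> (k <= size s)%N).

End RingDefs.

(* Let A be the annihilator of M_n/M_{n-1}; it contains all the others and is
   proper.  Pick generators x_i of the cyclic factors M_i/M_{i-1}.  If
   Σ r_i x_i lies in A M, then going down the series the last coefficient
   kills M_i/M_{i-1}, hence lies in A, and purity (M_{i-1} ∩ A M_i = A M_{i-1})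
   lets the induction continue.  So M/AM is free on the x_i over R/A ≠ 0 and
   needs n generators, while the x_i themselves generate M. *)

From HB Require Import structures.
From mathcomp Require Import all_boot all_algebra.
From Stdlib Require Import ClassicalEpsilon FunctionalExtensionality PropExtensionality.
Set Implicit Arguments. Unset Strict Implicit. Unset Printing Implicit Defensive.
Import GRing.Theory.
Local Open Scope ring_scope.

Section Submodule.
Variables (R : comPzRingType) (V : lmodType R) (P : V -> Prop).
Hypothesis subP : submodule P.

Lemma submod0 : P 0. Proof. by case: subP. Qed.
Lemma submodD x y : P x -> P y -> P (x + y). Proof. by case: subP => _ + _; apply. Qed.
Lemma submodZ r x : P x -> P (r *: x). Proof. by case: subP => _ _; apply. Qed.
Lemma submodN x : P x -> P (- x). Proof. by rewrite -scaleN1r; apply: submodZ. Qed.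
Lemma submodB x y : P x -> P y -> P (x - y).
Proof. by move=> Px Py; apply: submodD Px (submodN Py). Qed.

End Submodule.

Section Quotient.
Variables (R : comPzRingType) (V : lmodType R) (P : V -> Prop).
Hypothesis subP : submodule P.

Definition quot_repr (v : V) : V := epsilon (inhabits 0) (fun w => P (w - v)).

Lemma quot_reprP v : P (quot_repr v - v).
Proof.
apply: (epsilon_spec (inhabits 0) (fun w => P (w - v))).
by exists v; rewrite subrr; apply: submod0.
Qed.

Lemma quot_repr_eq v w : P (v - w) -> quot_repr v = quot_repr w.
Proof.
move=> Pvw; rewrite /quot_repr; congr epsilon.
apply: functional_extensionality => u; apply: propositional_extensionality.
split=> Pu.
- by have := submodD subP Pu Pvw; rewrite addrA subrK.
- by have := submodD subP Pu (submodN subP Pvw); rewrite opprB addrA subrK.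
Qed.

Lemma quot_repr_idem v : quot_repr (quot_repr v) = quot_repr v.
Proof. exact/quot_repr_eq/quot_reprP. Qed.

(* The proof [subP] is a formal parameter so that the module instances below,
   whose axioms need it, are declared on a type that mentions it. *)
Definition quotmod of submodule P := {v : V | quot_repr v == v}.
HB.instance Definition _ := Choice.on (quotmod subP).

Definition quot_pi (v : V) : quotmod subP :=
  exist _ (quot_repr v) (introT eqP (quot_repr_idem v)).

Lemma quot_pi_eq v w : P (v - w) -> quot_pi v = quot_pi w.
Proof. by move=> Pvw; apply: val_inj; apply: quot_repr_eq. Qed.

Lemma quot_pi_eqP v w : quot_pi v = quot_pi w -> P (v - w).
Proof.
move=> /(congr1 val) /= eq_vw.
have := submodD subP (quot_reprP v) (submodN subP (quot_reprP w)).
by rewrite eq_vw opprB addrC addrA subrK => /(submodN subP); rewrite opprB.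
Qed.

Lemma quot_piK (q : quotmod subP) : quot_pi (val q) = q.
Proof. by apply: val_inj; case: q => v /= /eqP. Qed.

Lemma quotmodW (Q : quotmod subP -> Prop) : (forall v, Q (quot_pi v)) -> forall q, Q q.
Proof. by move=> Qpi q; rewrite -(quot_piK q). Qed.

Lemma quot_pi_reprP v : P (val (quot_pi v) - v). Proof. exact: quot_reprP. Qed.

Definition quot_add (a b : quotmod subP) := quot_pi (val a + val b).
Definition quot_opp (a : quotmod subP) := quot_pi (- val a).
Definition quot_scale (r : R) (a : quotmod subP) := quot_pi (r *: val a).

Lemma quot_addE v w : quot_add (quot_pi v) (quot_pi w) = quot_pi (v + w).
Proof.
apply: quot_pi_eq; have := submodD subP (quot_pi_reprP v) (quot_pi_reprP w).
by rewrite addrACA opprD.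
Qed.

Lemma quot_oppE v : quot_opp (quot_pi v) = quot_pi (- v).
Proof. by apply: quot_pi_eq; rewrite -opprD; exact/(submodN subP)/quot_pi_reprP. Qed.

Lemma quot_scaleE r v : quot_scale r (quot_pi v) = quot_pi (r *: v).
Proof. by apply: quot_pi_eq; rewrite -scalerBr; exact/(submodZ subP)/quot_pi_reprP. Qed.

Lemma quot_addA : associative quot_add.
Proof. by do 3!elim/quotmodW=> ?; rewrite !quot_addE addrA. Qed.
Lemma quot_addC : commutative quot_add.
Proof. by do 2!elim/quotmodW=> ?; rewrite !quot_addE addrC. Qed.
Lemma quot_add0 : left_id (quot_pi 0) quot_add.
Proof. by elim/quotmodW=> ?; rewrite quot_addE add0r. Qed.
Lemma quot_addN : left_inverse (quot_pi 0) quot_opp quot_add.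
Proof. by elim/quotmodW=> ?; rewrite quot_oppE quot_addE addNr. Qed.

HB.instance Definition _ :=
  GRing.isZmodule.Build (quotmod subP) quot_addA quot_addC quot_add0 quot_addN.

Lemma quot_piD v w : quot_pi (v + w) = quot_pi v + quot_pi w.
Proof. by rewrite -quot_addE. Qed.

Lemma quot_scaleA a b q : quot_scale a (quot_scale b q) = quot_scale (a * b) q.
Proof. by elim/quotmodW: q => ?; rewrite !quot_scaleE scalerA. Qed.
Lemma quot_scale1 : left_id 1 quot_scale.
Proof. by elim/quotmodW=> ?; rewrite quot_scaleE scale1r. Qed.
Lemma quot_scaleDr : right_distributive quot_scale +%R.
Proof.
by move=> r; do 2!elim/quotmodW=> ?; rewrite -quot_piD !quot_scaleE -quot_piD scalerDr.
Qed.
Lemma quot_scaleDl q : {morph quot_scale^~ q : a b / a + b}.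
Proof. by elim/quotmodW: q => ? a b; rewrite !quot_scaleE -quot_piD scalerDl. Qed.

HB.instance Definition _ :=
  GRing.Zmodule_isLmodule.Build R (quotmod subP)
    quot_scaleA quot_scale1 quot_scaleDr quot_scaleDl.

Lemma quot_piZ r v : quot_pi (r *: v) = r *: quot_pi v.
Proof. by rewrite -quot_scaleE. Qed.
Lemma quot_pi_eq0 v : quot_pi v = 0 <-> P v.
Proof.
split=> [/quot_pi_eqP | Pv]; first by rewrite subr0.
by apply: quot_pi_eq; rewrite subr0.
Qed.

End Quotient.

Section IdealSpan.
Variables (R : comPzRingType) (E : lmodType R) (A : R -> Prop).
Hypothesis idA : ideal A.

Lemma ideal_submod : submodule (A : R^o -> Prop). Proof. exact: idA. Qed.

Lemma idealMl r a : A a -> A (r * a). Proof. exact: (submodZ ideal_submod). Qed.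
Lemma idealMr r a : A a -> A (a * r). Proof. by rewrite mulrC; apply: idealMl. Qed.

Inductive ideal_span (F : E -> Prop) : E -> Prop :=
| ideal_span0 : ideal_span F 0
| ideal_spanD1 a f y : A a -> F f -> ideal_span F y -> ideal_span F (a *: f + y).

Lemma ideal_spanD F x y : ideal_span F x -> ideal_span F y -> ideal_span F (x + y).
Proof.
elim=> [|a f z Aa Ff _ IH] Fy; first by rewrite add0r.
by rewrite -addrA; apply: ideal_spanD1 => //; apply: IH.
Qed.

Lemma ideal_spanZ F r x : ideal_span F x -> ideal_span F (r *: x).
Proof.
elim=> [|a f z Aa Ff _ IH]; first by rewrite scaler0; apply: ideal_span0.
by rewrite scalerDr scalerA; apply: ideal_spanD1 => //; apply: idealMl.
Qed.

Lemma ideal_span_submod F : submodule (ideal_span F).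
Proof.
by split; [apply: ideal_span0 | move=> ??; apply: ideal_spanD | move=> ??; apply: ideal_spanZ].
Qed.

Lemma ideal_span1 F a f : A a -> F f -> ideal_span F (a *: f).
Proof.
by move=> Aa Ff; rewrite -[_ *: f]addr0; apply: ideal_spanD1 => //; apply: ideal_span0.
Qed.

Lemma ideal_span_sub (F G : E -> Prop) x :
  (forall y, F y -> G y) -> ideal_span F x -> ideal_span G x.
Proof.
move=> FG; elim=> [|a f z Aa Ff _ IH]; first exact: ideal_span0.
by apply: ideal_spanD1 => //; apply: FG.
Qed.

(* F ∩ A E = A F for pure F, by tensoring with R/A: an f in F ∩ A E gives the
   zero tensor (1 + A) ⊗ f in R/A ⊗ E, hence in R/A ⊗ F, and evaluating the
   bilinear map (r + A, y) ↦ r y + A F on it puts f in A F. *)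
Lemma pure_ideal_span (F : E -> Prop) f :
  pure F -> F f -> ideal_span (fun _ => True) f -> ideal_span F f.
Proof.
case=> _ pureF Ff AEf.
pose RA := quotmod ideal_submod.
pose one : RA := quot_pi ideal_submod 1.
have A_one a : A a -> a *: one = 0.
  move=> Aa; rewrite -quot_piZ; apply/quot_pi_eq0.
  by rewrite /GRing.scale /= mulr1.
have zero_tensor : tensor_zero_on (fun _ => True) [:: (one, f)].
  move=> T B [Bl1 Bl2 Br1 Br2]; rewrite big_seq1 /=.
  elim: AEf => [|a e y Aa _ _ IH].
    by rewrite -(scale0r (0 : E)) Br2 // scale0r.
  by rewrite Br1 // IH addr0 Br2 // -Bl2 // A_one // -(scale0r one) Bl2 // scale0r.
pose B (c : RA) (y : E) : quotmod (ideal_span_submod F) :=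
  quot_pi (ideal_span_submod F) ((val c : R) *: y).
have A_repr r : A (val (quot_pi ideal_submod r) - r) by apply: quot_pi_reprP.
have bilB : bilinear_on F B.
  split=> [y c1 c2 Fy | y r c Fy | c y z _ _ | c r y _]; rewrite /B.
  - rewrite -quot_piD; apply: quot_pi_eq; rewrite -!scalerDl -scalerBl.
    exact: ideal_span1 (A_repr _) Fy.
  - rewrite -quot_piZ; apply: quot_pi_eq; rewrite scalerA -scalerBl.
    exact: ideal_span1 (A_repr _) Fy.
  - by rewrite scalerDr quot_piD.
  - by rewrite -quot_piZ scalerA mulrC -scalerA.
have Aone_f : ideal_span F ((val one : R) *: f).
  have Fs p : p \in [:: (one, f)] -> F p.2 by rewrite inE => /eqP->.
  apply/(quot_pi_eq0 (ideal_span_submod F)).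
  by have := pureF _ _ Fs zero_tensor _ B bilB; rewrite big_seq1.
suff : ideal_span F ((val one : R) *: f - (val one - 1) *: f).
  by rewrite scalerBl scale1r opprB addrC subrK.
apply: ideal_spanD Aone_f _; rewrite -scaleNr; apply: ideal_span1 Ff.
exact: (submodN ideal_submod (A_repr 1)).
Qed.

End IdealSpan.

Section FreeModuloIdeal.
Variables (R : comPzRingType) (A : R -> Prop).
Hypotheses (idA : ideal A) (A_proper : ~ A 1).

Lemma ideal_det_congr m (X Y : 'M[R]_m) :
  (forall i j, A (X i j - Y i j)) -> A (\det X - \det Y).
Proof.
move=> AXY; pose congr a b := A (a - b).
have congr_refl a : congr a a by rewrite /congr subrr; apply: (submod0 (ideal_submod idA)).
have congrD a b c d : congr a b -> congr c d -> congr (a + c) (b + d).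
  by rewrite /congr opprD addrACA => Aab Acd; apply: (submodD (ideal_submod idA)).
have congrM a b c d : congr a b -> congr c d -> congr (a * c) (b * d).
  rewrite /congr => Aab Acd; rewrite -[a * c](subrK (b * c)) -mulrBl -addrA -mulrBr.
  by apply: (submodD (ideal_submod idA)); [apply: idealMr | apply: idealMl].
apply: (big_ind2 congr) => // sigma _; apply: (congrM) => //.
by apply: (big_ind2 congr) => // i _; apply: AXY.
Qed.

Lemma det_notin_ideal n (C D : 'M[R]_n) :
  (forall i j, A ((C *m D) i j - (1%:M : 'M_n) i j)) -> ~ A (\det C).
Proof.
move=> /ideal_det_congr; rewrite det_mulmx det1 => A_detCD_1 A_detC.
apply: A_proper; rewrite -[1](subKr (\det C * \det D)).
by apply: (submodB (ideal_submod idA)) A_detCD_1; apply: idealMr.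
Qed.

(* Expressing the x_j through s and back gives C D ≡ 1 modulo A, where C is
   padded with zero columns when s is shorter than n, making det C = 0. *)
Lemma free_mod_ideal_leq_size (M : lmodType R) n (x : nat -> M) (s : seq M) :
  (forall m, exists c : nat -> R, m = \sum_(j < n) c j *: x j) ->
  (forall r : nat -> R, \sum_(j < n) r j *: x j = 0 -> forall j, (j < n)%N -> A (r j)) ->
  generates s -> (n <= size s)%N.
Proof.
move=> x_span x_free s_gen; rewrite leqNgt; apply/negP => lt_s_n.
set k := size s in lt_s_n.
have /ClassicalEpsilon.choice[d dP] l :
    exists d : nat -> R, s`_l = \sum_(j < n) d j *: x j by apply: x_span.
have /ClassicalEpsilon.choice[c cP] i :
    exists c : nat -> R, x i = \sum_(l < k) c l *: s`_l.
  have [c0 ->] := s_gen (x i); exists (fun l => oapp c0 0 (insub l)).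
  by apply: eq_bigr => l _; rewrite valK.
pose C : 'M[R]_n := \matrix_(i, l) (if (l < k)%N then c i l else 0).
pose D : 'M[R]_n := \matrix_(l, j) d l j.
have detC0 : \det C = 0.
  by rewrite (expand_det_col C (Ordinal lt_s_n)) big1 // => i _; rewrite mxE ltnn mul0r.
suff CD_1 i j : A ((C *m D) i j - (1%:M : 'M_n) i j).
  by apply: (det_notin_ideal CD_1); rewrite detC0; apply: (submod0 (ideal_submod idA)).
have -> : (C *m D) i j = \sum_(l < k) c i l * d l j.
  rewrite mxE [RHS](big_ord_widen n (fun l => c i l * d l j) (ltnW lt_s_n)) [RHS]big_mkcond.
  by apply: eq_bigr => l _; rewrite !mxE; case: ifP; rewrite ?mul0r.
rewrite mxE eq_sym.
apply: (x_free (fun j => \sum_(l < k) c i l * d l j - (j == i :> nat)%:R)) => //.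
have cdx : \sum_(j < n) (\sum_(l < k) c i l * d l j) *: x j = x i.
  under eq_bigr do rewrite scaler_suml.
  rewrite exchange_big /= cP; apply: eq_bigr => l _.
  by rewrite dP scaler_sumr; apply: eq_bigr => t _; rewrite scalerA.
under eq_bigr do rewrite scalerBl.
rewrite sumrB cdx (bigD1 i) //= eqxx scale1r big1 ?addr0 ?subrr // => j' ji.
by rewrite (negbTE (ji : val j' != val i)) scale0r.
Qed.

End FreeModuloIdeal.

Section PureCompositionSeries.
Variables (R : comPzRingType) (M : lmodType R) (n : nat).
Variables (Ms : nat -> M -> Prop) (x : nat -> M).
Hypothesis series : pure_composition_series Ms n.
Hypothesis x_gen : forall i, (0 < i <= n)%N ->
  Ms i (x i) /\ forall y, Ms i y -> exists r, Ms i.-1 (y - r *: x i).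
Hypothesis top_quot_nonzero : (0 < n)%N -> exists2 y, Ms n y & ~ Ms n.-1 y.
Hypothesis ann_le_top : forall i r, (0 < i <= n)%N ->
  ann_quotient (Ms i) (Ms i.-1) r -> ann_quotient (Ms n) (Ms n.-1) r.

Lemma series_pure i : (i <= n)%N -> pure (Ms i).
Proof. by case: series => _ _ + _; apply. Qed.

Lemma series_submod i : (i <= n)%N -> submodule (Ms i).
Proof. by case/series_pure. Qed.

Lemma series_mono i j : (i <= j <= n)%N -> forall y, Ms i y -> Ms j y.
Proof.
case/andP; elim: j => [|j IH]; first by rewrite leqn0 => /eqP->.
rewrite leq_eqVlt => /orP[/eqP-> // | lt_ij] lt_jn y Miy.
by case: series => _ _ _ /(_ j lt_jn) [+ _]; apply; apply: IH => //; apply: ltnW.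
Qed.

Lemma series_coord i : (i <= n)%N ->
  forall m, Ms i m -> exists c : nat -> R, m = \sum_(j < i) c j *: x j.+1.
Proof.
elim: i => [|i IH] le_in m Mim.
  by exists (fun _ => 0); rewrite big_ord0; case: series => /(_ m) [+ _] _ _ _; apply.
have [_ /(_ m Mim) [r Mi_mr]] := x_gen (i := i.+1) le_in.
have [c Ec] := IH (ltnW le_in) _ Mi_mr.
exists (fun j => if j == i then r else c j).
rewrite big_ord_recr /= eqxx (eq_bigr (fun j : 'I_i => c j *: x j.+1)) -?Ec ?subrK //.
by move=> j _; rewrite ltn_eqF.
Qed.

Lemma series_sum i (r : nat -> R) : (i <= n)%N -> Ms i (\sum_(j < i) r j *: x j.+1).
Proof.
move=> le_in; have subMi := series_submod le_in.
apply: (big_ind (Ms i)) => [|u v|j _]; [exact: submod0 | exact: submodD |].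
apply: (submodZ subMi); apply: (series_mono (i := j.+1)).
  by rewrite ltn_ord.
by case: (x_gen (i := j.+1)); rewrite ?(leq_trans (ltn_ord j)).
Qed.

Definition top_ann : R -> Prop := ann_quotient (Ms n) (Ms n.-1).

Lemma top_ann_ideal : ideal top_ann.
Proof.
have subMn1 := series_submod (leq_pred n).
split=> [y _ | a b Aa Ab y Mny | r a Aa y Mny]; first by rewrite scale0r; apply: submod0.
  by rewrite scalerDl; apply: (submodD subMn1); [apply: Aa | apply: Ab].
by rewrite -scalerA; apply: (submodZ subMn1); apply: Aa.
Qed.

Lemma top_ann_proper : (0 < n)%N -> ~ top_ann 1.
Proof. by move=> /top_quot_nonzero [y Mny notMn1y] /(_ y Mny); rewrite scale1r. Qed.

Lemma ann_quotient_gen i c : (0 < i <= n)%N ->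
  Ms i.-1 (c *: x i) -> ann_quotient (Ms i) (Ms i.-1) c.
Proof.
move=> i_in Mcx y Miy; have [_ /(_ y Miy) [r Mi1_yr]] := x_gen i_in.
have subMi1 := series_submod (leq_trans (leq_pred i) (proj2 (andP i_in))).
rewrite -(subrK (r *: x i) y) scalerDr scalerA mulrC -scalerA.
by apply: (submodD subMi1); apply: (submodZ subMi1).
Qed.

Lemma ideal_span_series_step i y : (i < n)%N ->
  ideal_span top_ann (Ms i.+1) y -> exists2 t, top_ann t & Ms i (y - t *: x i.+1).
Proof.
move=> lt_in; have subMi := series_submod (ltnW lt_in).
have subA := ideal_submod top_ann_ideal.
elim=> [|a f z Aa Mf _ [t At Mzt]].
  by exists 0; [apply: (submod0 subA) | rewrite scale0r subr0; apply: (submod0 subMi)].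
have [_ /(_ f Mf) [r Mfr]] := x_gen (i := i.+1) lt_in.
exists (a * r + t); first by apply: (submodD subA) => //; apply: (idealMr top_ann_ideal).
have -> : a *: f + z - (a * r + t) *: x i.+1 = a *: (f - r *: x i.+1) + (z - t *: x i.+1).
  by rewrite scalerDl -scalerA scalerBr opprD addrACA.
by apply: (submodD subMi) => //; apply: (submodZ subMi).
Qed.

Lemma ideal_span_series_coef i (r : nat -> R) : (i <= n)%N ->
  ideal_span top_ann (Ms i) (\sum_(j < i) r j *: x j.+1) ->
  forall j, (j < i)%N -> top_ann (r j).
Proof.
elim: i => [//|i IH] le_in; have lt_in : (i < n)%N := le_in.
have subMi := series_submod (ltnW lt_in); have idA := top_ann_ideal.
rewrite big_ord_recr /=; set w := \sum_(j < i) _.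
move=> Aw; have [t At Mwt] := ideal_span_series_step lt_in Aw.
have Mw : Ms i w by apply: series_sum (ltnW lt_in).
have Ari : top_ann (r i).
  have : Ms i ((r i - t) *: x i.+1).
    by rewrite scalerBl -(addKr w (_ - _)) addrC addrA; apply: (submodB subMi).
  move=> /(ann_quotient_gen (i := i.+1) lt_in) /(@ann_le_top i.+1 _ lt_in) Arit.
  by rewrite -(subrK t (r i)); apply: (submodD (ideal_submod idA)).
move=> j; rewrite ltnS leq_eqVlt => /orP[/eqP-> // | lt_ji].
apply: IH (ltnW lt_in) _ _ lt_ji; apply: (pure_ideal_span idA (series_pure (ltnW lt_in)) Mw).
have -> : w = w + r i *: x i.+1 + (- r i) *: x i.+1 by rewrite scaleNr addrK.
apply: ideal_spanD; first exact: ideal_span_sub Aw.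
by apply: ideal_span1 => //; apply: (submodN (ideal_submod idA)).
Qed.

Lemma series_generates : generates (mkseq (fun i => x i.+1) n).
Proof.
move=> m; have [c ->] : exists c : nat -> R, m = \sum_(j < n) c j *: x j.+1.
  by apply: (series_coord (leqnn n)); case: series.
by rewrite size_mkseq; exists (fun i => c i); apply: eq_bigr => i _; rewrite nth_mkseq.
Qed.

Lemma series_leq_size_generators (s : seq M) : generates s -> (n <= size s)%N.
Proof.
have [-> // | n_gt0] := posnP n.
apply: (free_mod_ideal_leq_size (x := fun j => x j.+1) top_ann_ideal (top_ann_proper n_gt0)).
  by move=> m; apply: (series_coord (leqnn n)); case: series.
move=> r r0; apply: ideal_span_series_coef (leqnn n) _; rewrite r0; exact: ideal_span0.
Qed.

End PureCompositionSeries.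

Theorem proposition1p4 (R : comPzRingType) (M : lmodType R) (n : nat)
    (Ms : nat -> M -> Prop) :
  arithmetic R ->
  finitely_generated M ->
  pure_composition_series Ms n ->
  (forall i, (0 < i <= n)%N -> cyclic_nonzero_quotient (Ms i) (Ms i.-1)) ->
  (forall i j, (0 < i)%N -> (i <= j)%N -> (j <= n)%N ->
     forall r : R, ann_quotient (Ms i) (Ms i.-1) r -> ann_quotient (Ms j) (Ms j.-1) r) ->
  min_num_generators M n.
Proof.
move=> _ _ series cyclic ann_incr.
have /ClassicalEpsilon.choice[x x_gen] i : exists x : M, (0 < i <= n)%N ->
    Ms i x /\ forall y, Ms i y -> exists r, Ms i.-1 (y - r *: x).
  have [/cyclic[[x gen] _] | i_out] := boolP (0 < i <= n)%N; first by exists x.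
  by exists 0 => i_in; case/negP: i_out.
have top_nonzero : (0 < n)%N -> exists2 y, Ms n y & ~ Ms n.-1 y.
  move=> n_gt0; have /cyclic[_ [y []]] : (0 < n <= n)%N by rewrite n_gt0 leqnn.
  by exists y.
have ann_le_top i r : (0 < i <= n)%N ->
    ann_quotient (Ms i) (Ms i.-1) r -> ann_quotient (Ms n) (Ms n.-1) r.
  by case/andP=> i_gt0 le_in; apply: ann_incr.
split=> [|s].
  exists (mkseq (fun i => x i.+1) n); rewrite size_mkseq; split=> //.
  exact: (series_generates (x := x) series x_gen).
exact: (series_leq_size_generators (x := x) series x_gen top_nonzero ann_le_top).
Qed.
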